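(* Let $A\in\mathbb{R}^{m\times n}$, let $X_0\in\mathbb{R}^{n\times m}$, and define iterates $$X_{k+1} = X_k - A^\top A S_k\,(S_k^\top A^\top A A^\top A S_k)^\dagger S_k^\top A^\top (A X_k - I),\qquad k\ge 0,$$ for arbitrary matrices $S_k\in\mathbb{R}^{m\times\tau}$. If $\mathrm{Range}(X_0)\subset\mathrm{Range}(A^\top A)$, then $\mathrm{Range}(X_k - A^\dagger)\subset\mathrm{Range}(A^\top A)$ for all $k$.
   Context: $M^\dagger$ denotes the Moore–Penrose pseudoinverse and $\mathrm{Range}(M)$ the column space of a real matrix $M$. *)

From HB Require Import structures.
From Stdlib Require Import ClassicalEpsilon.
From mathcomp Require Import all_boot all_order all_algebra.
From mathcomp Require Import reals.
Set Implicit Arguments. Unset Strict Implicit. Unset Printing Implicit Defensive.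
Import GRing.Theory Num.Theory.
Local Open Scope ring_scope.

Definition penrose (R : realType) (m n : nat) (A : 'M[R]_(m, n)) (X : 'M[R]_(n, m)) : Prop :=
  [/\ A *m X *m A = A, X *m A *m X = X, (A *m X)^T = A *m X & (X *m A)^T = X *m A].

Definition pinv (R : realType) (m n : nat) (A : 'M[R]_(m, n)) : 'M[R]_(n, m) :=
  epsilon (inhabits 0) (penrose A).

(* Range(M) \subset Range(N), i.e. the column space of M is contained in the
   column space of N (= row space of M^T contained in row space of N^T). *)
Definition range_sub (R : realType) (p q r : nat) (M : 'M[R]_(p, q)) (N : 'M[R]_(p, r)) : bool :=
  (M^T <= N^T)%MS.

From HB Require Import structures.
From Stdlib Require Import ClassicalEpsilon.
From mathcomp Require Import all_boot all_order all_algebra.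
From mathcomp Require Import reals.
Set Implicit Arguments. Unset Strict Implicit. Unset Printing Implicit Defensive.
Import GRing.Theory Num.Theory.
Local Open Scope ring_scope.

(* Every update X_(k+1) - X_k has the form A^T A Y, so Range(X_k - A^dagger)
   stays inside Range(A^T A) once it starts there.  Since X_0 lies there, it
   remains to see that A^dagger does: the Penrose equations give
   A^dagger = A^T A (A^dagger A^dagger^T A^dagger).  As [pinv] is a choice,
   this needs the existence of a pseudoinverse, obtained from a full-rank
   factorisation A = C F as F^T (F F^T)^-1 (C^T C)^-1 C^T. *)

Lemma mulmx_trmx_eq0 (R : realDomainType) p q (M : 'M[R]_(p, q)) :
  M *m M^T = 0 -> M = 0.
Proof.
move=> MMt0; apply/matrixP => i j; rewrite mxE.
have := congr1 (fun N : 'M_p => N i i) MMt0; rewrite !mxE => /psumr_eq0P sq0.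
have terms_ge0 l (_ : true) : 0 <= M i l * M^T l i by rewrite mxE -expr2 sqr_ge0.
have /eqP := sq0 terms_ge0 j isT.
by rewrite mxE -expr2 sqrf_eq0 => /eqP.
Qed.

Lemma gram_unitmx (R : realFieldType) p q (B : 'M[R]_(p, q)) :
  row_free B -> B *m B^T \in unitmx.
Proof.
rewrite -kermx_eq0 => /eqP kerB0.
rewrite -row_free_unit -kermx_eq0 -submx0.
set K := kermx _.
have KB0 : K *m B = 0.
  apply: mulmx_trmx_eq0.
  by rewrite trmx_mul mulmxA -(mulmxA K) mulmx_ker mul0mx.
by rewrite -kerB0 sub_kermx KB0.
Qed.

Lemma penrose_full_rank_factor (R : realType) m n r
    (C : 'M[R]_(m, r)) (F : 'M[R]_(r, n)) :
    C^T *m C \in unitmx -> F *m F^T \in unitmx ->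
  penrose (C *m F) (F^T *m invmx (F *m F^T) *m invmx (C^T *m C) *m C^T).
Proof.
move=> uC uF; set X := _ *m C^T.
have AX : C *m F *m X = C *m invmx (C^T *m C) *m C^T.
  by rewrite !mulmxA -(mulmxA C F) -(mulmxA C) mulmxV // mulmx1.
have XA : X *m (C *m F) = F^T *m invmx (F *m F^T) *m F.
  rewrite -!mulmxA; congr (_ *m (_ *m _)).
  by rewrite (mulmxA C^T C F) mulmxA mulVmx // mul1mx.
split.
- by rewrite AX !mulmxA -(mulmxA _ C^T C) mulmxKV.
- by rewrite XA !mulmxA -(mulmxA (F^T *m invmx (F *m F^T)) F F^T) mulmxKV.
- by rewrite AX !trmx_mul trmx_inv trmxK !trmx_mul trmxK !mulmxA.
- by rewrite XA !trmx_mul trmx_inv trmxK !trmx_mul trmxK !mulmxA.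
Qed.

Lemma penrose_exists (R : realType) m n (A : 'M[R]_(m, n)) :
  exists X, penrose A X.
Proof.
have uC : (col_base A)^T *m col_base A \in unitmx.
  rewrite -[X in _ *m X]trmxK gram_unitmx // /row_free mxrank_tr.
  exact: col_base_full.
have uF : row_base A *m (row_base A)^T \in unitmx.
  by rewrite gram_unitmx ?row_base_free.
have := penrose_full_rank_factor uC uF; rewrite mulmx_base => penroseA.
by eexists; exact: penroseA.
Qed.

Lemma pinvP (R : realType) m n (A : 'M[R]_(m, n)) : penrose A (pinv A).
Proof. exact: epsilon_spec (penrose_exists A). Qed.

Lemma range_sub_mulmx (R : realType) p q r (M : 'M[R]_(p, q)) (N : 'M[R]_(q, r)) :
  range_sub (M *m N) M.
Proof. by rewrite /range_sub trmx_mul submxMl. Qed.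

Lemma range_subB (R : realType) p q r (M N : 'M[R]_(p, q)) (B : 'M[R]_(p, r)) :
  range_sub M B -> range_sub N B -> range_sub (M - N) B.
Proof. by rewrite /range_sub linearB /= => sMB sNB; rewrite addmx_sub // eqmx_opp. Qed.

Lemma penrose_range_sub (R : realType) m n (A : 'M[R]_(m, n)) (X : 'M[R]_(n, m)) :
  penrose A X -> range_sub X (A^T *m A).
Proof.
case=> AXA XAX AXsym XAsym.
have eAt : A^T = A^T *m A *m X by rewrite -{1}AXA trmx_mul AXsym mulmxA.
have -> : X = A^T *m A *m (X *m X^T *m X).
  by rewrite -{1}XAX -XAsym trmx_mul {1}eAt !mulmxA.
exact: range_sub_mulmx.
Qed.

Theorem lemma3 (R : realType) (m n tau : nat) (A : 'M[R]_(m, n))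
  (S : nat -> 'M[R]_(n, tau)) (X : nat -> 'M[R]_(n, m))
  (HX : forall k, X k.+1 = X k - A^T *m A *m S k
          *m pinv ((S k)^T *m A^T *m A *m A^T *m A *m S k)
          *m (S k)^T *m A^T *m (A *m X k - 1%:M))
  (H0 : range_sub (X 0%N) (A^T *m A)) :
  forall k, range_sub (X k - pinv A) (A^T *m A).
Proof.
elim=> [|k IH].
  by apply: range_subB => //; exact: penrose_range_sub (pinvP A).
rewrite HX addrAC; set B := A^T *m A in IH *.
rewrite -!(mulmxA B).
by apply: range_subB => //; exact: range_sub_mulmx.
Qed.
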